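(* Let $M$ be a generic metric space and let $r$ be a real number with $0<r<\min\{s(M)/4,\ e(M)/4,\ t(M)/6\}$. Then the sphere $S_r(M)=\{Y\in\mathcal{GH}: d_{GH}(M,Y)=r\}$ is path connected in $\mathcal{GH}$, i.e., any two of its elements can be joined by a continuous curve in $\mathcal{GH}$ whose image lies in $S_r(M)$.
   Context: For a metric space $M$ with $\#M\ge3$: $s(M)=\inf\{|xx'|: x\ne x'\}$; $t(M)=\inf\{|xx'|+|x'x''|-|xx''|: x,x',x''\text{ pairwise distinct}\}$; $S(M)$ is the set of bijections $M\to M$ and $e(M)=\inf\{\operatorname{dis}f: f\in S(M), f\ne\mathrm{id}\}$, where $\operatorname{dis}f=\sup_{x,x'}||xx'|-|f(x)f(x')||$. $M$ is called generic if $\#M\ge3$ and $s(M),t(M),e(M)$ are all positive. $d_{GH}$ is the Gromov–Hausdorff distance (possibly infinite): $d_{GH}(X,Y)$ is the infimum of $r$ such that there exist a metric space $Z$ and subsets $X',Y'\subset Z$ isometric to $X,Y$ with Hausdorff distance $d_H(X',Y')\le r$. $\mathcal{GH}$ is the class (in the sense of von Neumann–Bernays–Gödel set theory) of representatives of isometry classes of all metric spaces; for each cardinal $n$ the subclass $\mathcal{GH}_n$ of spaces of cardinality at most $n$ is a set with topology based on open $d_{GH}$-balls, and a map from a topological space into $\mathcal{GH}$ is continuous if it is continuous into some (equivalently, every) $\mathcal{GH}_n$ containing its image. A continuous curve is a continuous map from a segment $[a,b]$. *)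

From Stdlib Require Import Reals.
From mathcomp Require Import all_boot all_order all_algebra.
From mathcomp Require Import boolp classical_sets reals constructive_ereal ereal Rstruct.
Set Implicit Arguments. Unset Strict Implicit. Unset Printing Implicit Defensive.
Import Order.TTheory GRing.Theory Num.Theory.
Local Open Scope classical_set_scope.
Local Open Scope ring_scope.

Record MetricSpace := {
  carrier :> Type;
  dist : carrier -> carrier -> R;
  dist_eq0 : forall x y, dist x y = 0 <-> x = y;
  dist_sym : forall x y, dist x y = dist y x;
  dist_tri : forall x y z, dist x z <= dist x y + dist y z
}.

Arguments dist {m} x y.

Local Open Scope ereal_scope.

Definition card_ge3 (M : MetricSpace) : Prop :=
  exists x y z : M, x <> y /\ y <> z /\ x <> z.

Definition s_of (M : MetricSpace) : \bar R :=
  ereal_inf [set d | exists x x' : M, x <> x' /\ d = (dist x x')%:E].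

Definition t_of (M : MetricSpace) : \bar R :=
  ereal_inf [set d | exists x x' x'' : M,
     [/\ x <> x', x' <> x'' & x <> x''] /\
     d = (dist x x' + dist x' x'' - dist x x'')%R%:E].

Definition dis (M : MetricSpace) (f : M -> M) : \bar R :=
  ereal_sup [set d | exists x x' : M,
     d = (`| dist x x' - dist (f x) (f x') |)%R%:E].

Definition e_of (M : MetricSpace) : \bar R :=
  ereal_inf [set d | exists f : M -> M, bijective f /\ f <> id /\ d = dis f].

Definition generic (M : MetricSpace) : Prop :=
  card_ge3 M /\ 0 < s_of M /\ 0 < e_of M /\ 0 < t_of M.

Definition isometric_map (X Z : MetricSpace) (f : X -> Z) : Prop :=
  forall x y : X, dist (f x) (f y) = dist x y.

(* X and Y are isometric (represent the same element of GH) *)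
Definition isometric (X Y : MetricSpace) : Prop :=
  exists f : X -> Y, bijective f /\ isometric_map f.

Definition nbhd_open (Z : MetricSpace) (A : set Z) (r : R) : set Z :=
  [set z | exists2 a, A a & (dist z a < r)%R].

Definition hausdorff (Z : MetricSpace) (A B : set Z) : \bar R :=
  ereal_inf [set d | exists r : R, [/\ (0 < r)%R,
     A `<=` nbhd_open B r, B `<=` nbhd_open A r & d = r%:E]].

Definition dGH (X Y : MetricSpace) : \bar R :=
  ereal_inf [set d | exists r : R, d = r%:E /\
     exists (Z : MetricSpace) (f : X -> Z) (g : Y -> Z),
       [/\ isometric_map f, isometric_map g & hausdorff (range f) (range g) <= r%:E]].

(* gamma : [a,b] -> GH is continuous, for the topology on GH whose base
   consists of the open balls { Y | d_GH(X,Y) < eps }: the preimage of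
   every basic open ball is open in [a,b]. *)
Definition GH_continuous_on (a b : R) (gamma : R -> MetricSpace) : Prop :=
  forall (X : MetricSpace) (eps : R) (t : R),
    (a <= t <= b)%R -> dGH X (gamma t) < eps%:E ->
    exists2 delta : R, (0 < delta)%R &
      forall t' : R, (a <= t' <= b)%R -> (`|t - t'| < delta)%R ->
        dGH X (gamma t') < eps%:E.

(* When 4r < s(M), e(M) and 6r < t(M), a space Y with d_GH(M, Y) = r is rigid: every
   almost optimal correspondence between M and Y contains the graph of one surjection
   c : Y -> M, whose distortion is exactly 2r; conversely every space admitting such a
   "sphere label" lies on the sphere S_r(M).  The doubled space M x {+,-}, in which each
   point is split into two points at distance 2r and the two sheets are shifted by +r and
   -r, carries a sphere label.  For Y with label c, the pseudometrics
   (1 - u) |yy'| + u |(c y, i) (c y', j)|  on Y x {+,-} interpolate between Y (u = 0) and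
   the doubled space (u = 1); their metric quotients all carry sphere labels and depend
   4r-Lipschitz on u for d_GH.  Going from Y1 to the doubled space and back to Y2 gives
   the path. *)

From Pilot Require Import Defs.
From Stdlib Require Import Reals.
From mathcomp Require Import all_boot all_order all_algebra.
From mathcomp Require Import boolp classical_sets reals constructive_ereal ereal Rstruct.
From mathcomp Require Import lra ring.
Import Defs. (* [Reals] also exports a [dist] *)
Set Implicit Arguments. Unset Strict Implicit. Unset Printing Implicit Defensive.
Import Order.TTheory GRing.Theory Num.Theory.
Local Open Scope ring_scope.
Local Open Scope classical_set_scope.
Local Bind Scope ring_scope with R. (* otherwise Stdlib's [R_scope] is used *)

Lemma dist_xx (X : MetricSpace) (x : X) : dist x x = 0.
Proof. exact/dist_eq0. Qed.

Lemma dist_ge0 (X : MetricSpace) (x y : X) : 0 <= dist x y.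
Proof. have := dist_tri x y x; rewrite dist_xx (dist_sym y x); lra. Qed.

(** * Correspondences and the Gromov–Hausdorff distance *)

Definition correspondence (X W : MetricSpace) (Rl : X -> W -> Prop) :=
  (forall x, exists w, Rl x w) /\ (forall w, exists x, Rl x w).

Definition distortion_le (X W : MetricSpace) (Rl : X -> W -> Prop) (k : R) :=
  forall x x' w w', Rl x w -> Rl x' w' -> `|dist x x' - dist w w'| <= k.
Arguments distortion_le {X W} Rl k%_ring_scope.

Lemma distortion_leP (X W : MetricSpace) (Rl : X -> W -> Prop) k x x' w w' :
  distortion_le Rl k -> Rl x w -> Rl x' w' ->
  dist x x' - dist w w' <= k /\ dist w w' - dist x x' <= k.
Proof.
move=> H h1 h2; have := H _ _ _ _ h1 h2; rewrite ler_norml => /andP[a b].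
split; lra.
Qed.

Lemma distortion_le_trans (X W : MetricSpace) (Rl : X -> W -> Prop) k k' :
  k <= k' -> distortion_le Rl k -> distortion_le Rl k'.
Proof. by move=> hk H x x' w w' h1 h2; apply: le_trans (H _ _ _ _ h1 h2) hk. Qed.

Definition rel_comp (X Y W : MetricSpace) (R1 : X -> Y -> Prop) (R2 : Y -> W -> Prop) :=
  fun x w => exists y, R1 x y /\ R2 y w.

Lemma correspondence_comp (X Y W : MetricSpace) (R1 : X -> Y -> Prop) (R2 : Y -> W -> Prop) :
  correspondence R1 -> correspondence R2 -> correspondence (rel_comp R1 R2).
Proof.
move=> [a1 b1] [a2 b2]; split.
- by move=> x; have [y hy] := a1 x; have [w hw] := a2 y; exists w, y.
- by move=> w; have [y hy] := b2 w; have [x hx] := b1 y; exists x, y.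
Qed.

Lemma distortion_le_comp (X Y W : MetricSpace) (R1 : X -> Y -> Prop) (R2 : Y -> W -> Prop) k1 k2 :
  distortion_le R1 k1 -> distortion_le R2 k2 -> distortion_le (rel_comp R1 R2) (k1 + k2).
Proof.
move=> d1 d2 x x' w w' [y [h1 h2]] [y' [h1' h2']].
have := d1 _ _ _ _ h1 h1'; have := d2 _ _ _ _ h2 h2'.
rewrite !ler_norml => /andP[a b] /andP[c d]; apply/andP; split; lra.
Qed.

Lemma correspondence_flip (X W : MetricSpace) (Rl : X -> W -> Prop) k :
  correspondence Rl -> distortion_le Rl k ->
  correspondence (fun w x => Rl x w) /\ distortion_le (fun w x => Rl x w) k.
Proof.
move=> [h1 h2] hd; split=> // w w' x x' e e'.
by rewrite distrC; apply: hd.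
Qed.

Section Gluing.
Variables (X W : MetricSpace) (Rl : X -> W -> Prop) (rho : R).
Hypotheses (Rl_corr : correspondence Rl) (Rl_dis : distortion_le Rl (2 * rho)) (rho_gt0 : 0 < rho).

Let detours x w := [set v | exists x' w', Rl x' w' /\ v = dist x x' + dist w' w].

Definition bridge (x : X) (w : W) : R := inf (detours x w).

Let detours_neq0 x w : detours x w !=set0.
Proof. by have [w' Hw'] := Rl_corr.1 x; exists (dist x x + dist w' w), x, w'. Qed.

Lemma bridge_le x w x' w' : Rl x' w' -> bridge x w <= dist x x' + dist w' w.
Proof.
move=> H; apply: ge_inf; last by exists x', w'.
by exists 0 => v [a [b [_ ->]]]; have := dist_ge0 x a; have := dist_ge0 b w; lra.
Qed.

Lemma bridge_ge0 x w : 0 <= bridge x w.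
Proof.
apply: lb_le_inf => // v [a [b [_ ->]]].
by have := dist_ge0 x a; have := dist_ge0 b w; lra.
Qed.

Lemma bridge_lipl x1 x2 w : bridge x1 w <= dist x1 x2 + bridge x2 w.
Proof.
suff : bridge x1 w - dist x1 x2 <= bridge x2 w by lra.
apply: lb_le_inf => // v [a [b [Hab ->]]].
by have := bridge_le x1 w Hab; have := dist_tri x1 x2 a; lra.
Qed.

Lemma bridge_lipr x w1 w2 : bridge x w1 <= bridge x w2 + dist w2 w1.
Proof.
suff : bridge x w1 - dist w2 w1 <= bridge x w2 by lra.
apply: lb_le_inf => // v [a [b [Hab ->]]].
by have := bridge_le x w1 Hab; have := dist_tri b w2 w1; lra.
Qed.

Lemma dist_le_bridgel x1 x2 w : dist x1 x2 <= bridge x1 w + bridge x2 w + 2 * rho.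
Proof.
suff : dist x1 x2 - bridge x2 w - 2 * rho <= bridge x1 w by lra.
apply: lb_le_inf => // v [a [b [Hab ->]]].
suff : dist x1 x2 - dist x1 a - dist b w - 2 * rho <= bridge x2 w by lra.
apply: lb_le_inf => // v' [a' [b' [Hab' ->]]].
have [h1 _] := distortion_leP Rl_dis Hab Hab'.
have := dist_tri x1 a x2; have := dist_tri a a' x2; have := dist_tri b w b'.
rewrite (dist_sym a' x2) (dist_sym b' w); lra.
Qed.

Lemma dist_le_bridger x w1 w2 : dist w1 w2 <= bridge x w1 + bridge x w2 + 2 * rho.
Proof.
suff : dist w1 w2 - bridge x w2 - 2 * rho <= bridge x w1 by lra.
apply: lb_le_inf => // v [a [b [Hab ->]]].
suff : dist w1 w2 - dist x a - dist b w1 - 2 * rho <= bridge x w2 by lra.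
apply: lb_le_inf => // v' [a' [b' [Hab' ->]]].
have [_ h1] := distortion_leP Rl_dis Hab Hab'.
have := dist_tri w1 b w2; have := dist_tri b b' w2; have := dist_tri a x a'.
rewrite (dist_sym b w1) (dist_sym a x); lra.
Qed.

Definition glue_dist (a b : X + W) : R :=
  match a, b with
  | inl x, inl x' => dist x x'
  | inr w, inr w' => dist w w'
  | inl x, inr w | inr w, inl x => bridge x w + rho
  end.

Lemma glue_dist_eq0 a b : glue_dist a b = 0 <-> a = b.
Proof.
case: a => [x|w]; case: b => [x'|w'] /=; try by split=> [/dist_eq0 -> | [->]] //; exact: dist_xx.
- by split=> // h; exfalso; have := bridge_ge0 x w'; have := rho_gt0; lra.
- by split=> // h; exfalso; have := bridge_ge0 x' w; have := rho_gt0; lra.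
Qed.

Lemma glue_dist_sym a b : glue_dist a b = glue_dist b a.
Proof. by case: a => [x|w]; case: b => [x'|w'] //=; rewrite dist_sym. Qed.

Lemma glue_dist_tri a b c : glue_dist a c <= glue_dist a b + glue_dist b c.
Proof.
case: a => [x|w]; case: b => [x'|w']; case: c => [x''|w''] /=.
- exact: dist_tri.
- have := bridge_lipl x x' w''; lra.
- have := dist_le_bridgel x x'' w'; lra.
- have := bridge_lipr x w'' w'; rewrite dist_sym; lra.
- have := bridge_lipl x'' x' w; rewrite dist_sym; lra.
- have := dist_le_bridger x' w w''; lra.
- have := bridge_lipr x'' w w'; rewrite dist_sym; lra.
- exact: dist_tri.
Qed.

Definition glue : MetricSpace :=
  {| carrier := X + W; dist := glue_dist; dist_eq0 := glue_dist_eq0;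
     dist_sym := glue_dist_sym; dist_tri := glue_dist_tri |}.

Lemma dGH_le_correspondence : (dGH X W <= rho%:E)%E.
Proof.
apply: ereal_inf_lbound; exists rho; split => //.
exists glue, inl, inr; split => //.
apply/lee_addgt0Pr => e he.
apply: ereal_inf_lbound; exists (rho + e); split; [move: rho_gt0; lra| | |by []].
- move=> _ [x _ <-]; have [w Hw] := Rl_corr.1 x.
  exists (inr w); first by exists w.
  by rewrite /= /glue_dist; have := bridge_le x w Hw; rewrite !dist_xx; lra.
- move=> _ [w _ <-]; have [x Hx] := Rl_corr.2 w.
  exists (inl x); first by exists x.
  by rewrite /= /glue_dist; have := bridge_le x w Hx; rewrite !dist_xx; lra.
Qed.

End Gluing.

Lemma correspondence_dGH_lt (X W : MetricSpace) (eps : R) :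
  (dGH X W < eps%:E)%E ->
  exists h, [/\ 0 < h, h < eps &
    exists Rl : X -> W -> Prop, correspondence Rl /\ distortion_le Rl (2 * h)].
Proof.
move=> /ereal_inf_lt [_ [r0 [-> [Z [f [g [hf hg hH]]]]]]].
rewrite lte_fin => r0e; pose h := (r0 + eps) / 2.
have /ereal_inf_lt [_ [r1 [r1p sub1 sub2 ->]]] : (hausdorff (range f) (range g) < h%:E)%E.
  by apply: le_lt_trans hH _; rewrite lte_fin /h; lra.
rewrite lte_fin => r1h.
exists h; split; [lra | by rewrite /h; lra |].
exists (fun x w => dist (f x) (g w) < h); split; first split.
- move=> x; have [_ [w _ <-] da] := sub1 (f x) (ex_intro2 _ _ x I erefl).
  by exists w; lra.
- move=> w; have [_ [x _ <-] da] := sub2 (g w) (ex_intro2 _ _ w I erefl).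
  by exists x; rewrite dist_sym; lra.
- move=> x x' w w' h1 h2; rewrite -hf -hg ler_norml.
  have := dist_tri (f x) (g w) (f x'); have := dist_tri (g w) (g w') (f x').
  have := dist_tri (g w) (f x) (g w'); have := dist_tri (f x) (f x') (g w').
  rewrite (dist_sym (g w') (f x')) (dist_sym (g w) (f x)) => *.
  apply/andP; split; rewrite /h in h1 h2 *; lra.
Qed.

Definition GH_lipschitz_on (a b K : R) (g : R -> MetricSpace) :=
  forall t t', a <= t <= b -> a <= t' <= b ->
    exists Rl : g t -> g t' -> Prop, correspondence Rl /\ distortion_le Rl (K * `|t - t'|).

Lemma GH_continuous_lipschitz (a b K : R) (g : R -> MetricSpace) :
  0 < K -> GH_lipschitz_on a b K g -> GH_continuous_on a b g.
Proof.
move=> K_gt0 Lg X eps t ht /correspondence_dGH_lt [h [h_gt0 heps [R1 [c1 d1]]]].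
exists ((eps - h) / K); first by apply: divr_gt0 => //; lra.
move=> t' ht' dt; have [R2 [c2 d2]] := Lg t t' ht ht'.
have hK : K * `|t - t'| < eps - h.
  by rewrite -ltr_pdivlMl // mulrC.
apply: (@le_lt_trans _ _ ((h + eps) / 2)%:E); last by rewrite lte_fin; lra.
have d12 := distortion_le_comp d1 d2.
apply: (dGH_le_correspondence (correspondence_comp c1 c2)); last lra.
by apply: distortion_le_trans d12; lra.
Qed.

Definition concat_path (g1 g2 : R -> MetricSpace) (t : R) : MetricSpace :=
  if pselect (t <= 1) then g1 t else g2 (2 - t).

Lemma GH_lipschitz_concat (K : R) (g1 g2 : R -> MetricSpace) :
  0 <= K -> GH_lipschitz_on 0 1 K g1 -> GH_lipschitz_on 0 1 K g2 ->
  (exists Rl : g1 1 -> g2 1 -> Prop, correspondence Rl /\ distortion_le Rl 0) ->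
  GH_lipschitz_on 0 2 K (concat_path g1 g2).
Proof.
move=> K_ge0 L1 L2 [B [Bc Bd]] t t' ht ht'.
wlog le_tt' : t t' ht ht' / t <= t'.
  move=> H; have [|lt_t't] := leP t t'; first exact: H.
  have [Rl [c d]] := H t' t ht' ht (ltW lt_t't).
  have [c' d'] := correspondence_flip c d.
  by exists (fun w x => Rl x w); rewrite distrC.
move: ht ht' => /andP[t0 t2] /andP[t'0 t'2].
rewrite /concat_path; case: pselect => t1; case: pselect => t'1.
- by apply: L1; apply/andP.
- have [R1 [c1 d1]] := L1 t 1 ltac:(apply/andP; split; lra) ltac:(apply/andP; split; lra).
  have [R2 [c2 d2]] :=
    L2 1 (2 - t') ltac:(apply/andP; split; lra) ltac:(apply/andP; split; lra).
  exists (rel_comp (rel_comp R1 B) R2).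
  split; first exact: correspondence_comp (correspondence_comp c1 Bc) c2.
  apply: distortion_le_trans (distortion_le_comp (distortion_le_comp d1 Bd) d2).
  rewrite (ler0_norm (_ : t - 1 <= 0)); last lra.
  rewrite (ger0_norm (_ : 0 <= 1 - (2 - t'))); last lra.
  rewrite (ler0_norm (_ : t - t' <= 0)); last lra.
  by rewrite addr0 -mulrDr; apply: ler_wpM2l => //; lra.
- by exfalso; lra.
- have [Rl [c d]] :=
    L2 (2 - t) (2 - t') ltac:(apply/andP; split; lra) ltac:(apply/andP; split; lra).
  rewrite (_ : `|2 - t - (2 - t')| = `|t - t'|) in d; last by rewrite distrC; congr `|_|; ring.
  by exists Rl.
Qed.

(** * Rigidity of generic spaces *)

Lemma lte_fin_le (k k' : R) (A : \bar R) : k' <= k -> (k%:E < A)%E -> (k'%:E < A)%E.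
Proof. by move=> hk; apply: le_lt_trans; rewrite lee_fin. Qed.

Lemma lte_fin_margin (k : R) (A B : \bar R) : (k%:E < A)%E -> (k%:E < B)%E ->
  exists2 e, 0 < e & ((k + e)%:E < A)%E /\ ((k + e)%:E < B)%E.
Proof.
have margin (C : \bar R) : (k%:E < C)%E -> exists2 e, 0 < e & ((k + e)%:E < C)%E.
  case: C => [a| |] //= ha; last by exists 1; rewrite ?ltry.
  by rewrite lte_fin in ha; exists ((a - k) / 2); rewrite ?lte_fin; lra.
move=> /margin [e1 e1_gt0 hA] /margin [e2 e2_gt0 hB].
exists (Num.min e1 e2); first by rewrite lt_min e1_gt0.
by split; [apply: lte_fin_le hA | apply: lte_fin_le hB]; rewrite lerD2l ge_min lexx ?orbT.
Qed.

Lemma eq_of_dist_le (M : MetricSpace) (k : R) : (k%:E < s_of M)%E ->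
  forall x x' : M, dist x x' <= k -> x = x'.
Proof.
move=> hk x x' hd; case: (pselect (x = x')) => // ne; exfalso.
have : (s_of M <= (dist x x')%:E)%E by apply: ereal_inf_lbound; exists x, x'.
by move/(lt_le_trans hk); rewrite lte_fin; lra.
Qed.

Lemma dist_gt_of_neq (M : MetricSpace) (k : R) : (k%:E < s_of M)%E ->
  forall x x' : M, x <> x' -> k < dist x x'.
Proof. by move=> hk x x' ne; rewrite ltNge; apply/negP => /(eq_of_dist_le hk). Qed.

Lemma triangle_defect_gt (M : MetricSpace) (k : R) : (k%:E < t_of M)%E ->
  forall x x' x'' : M, x <> x' -> x' <> x'' -> x <> x'' ->
  k < dist x x' + dist x' x'' - dist x x''.
Proof.
move=> hk x x' x'' n1 n2 n3.
have : (t_of M <= (dist x x' + dist x' x'' - dist x x'')%:E)%E.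
  by apply: ereal_inf_lbound; exists x, x', x''.
by move/(lt_le_trans hk); rewrite lte_fin.
Qed.

Lemma bijective_eq_id (M : MetricSpace) (f : M -> M) (k : R) : (k%:E < e_of M)%E ->
  bijective f -> (forall x x', `|dist x x' - dist (f x) (f x')| <= k) -> f = id.
Proof.
move=> hk f_bij f_dis; case: (pselect (f = id)) => // f_neq; exfalso.
have : (e_of M <= dis f)%E by apply: ereal_inf_lbound; exists f.
have : (dis f <= k%:E)%E by apply: ge_ereal_sup => _ [x [x' ->]]; rewrite lee_fin.
by move=> h1 /le_trans /(_ h1) /(lt_le_trans hk); rewrite ltxx.
Qed.

Definition label_rel (M W : MetricSpace) (c : W -> M) : M -> W -> Prop := fun x w => x = c w.

Section Rigidity.
Variables (M W : MetricSpace) (c : W -> M) (rho h : R) (Rl : M -> W -> Prop).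
Hypotheses (c_surj : forall x, exists w, c w = x)
  (c_dis : distortion_le (label_rel c) (2 * rho))
  (hs : ((2 * h + 2 * rho)%:E < s_of M)%E) (he : ((2 * h + 2 * rho)%:E < e_of M)%E)
  (Rl_corr : correspondence Rl) (Rl_dis : distortion_le Rl (2 * h)).

Let label_dist w w' := distortion_leP c_dis (erefl (c w)) (erefl (c w')).

(* [Rl] composed with a section of [c] moves points of [M] by less than [s(M)] and
   distorts by less than [e(M)], so it is the identity. *)
Lemma correspondence_contains_label w : Rl (c w) w.
Proof.
have close := eq_of_dist_le hs.
have [lift lift_ok] := choice c_surj.
have [f f_ok] := choice (fun x => Rl_corr.2 (lift x)).
have [v v_ok] := choice Rl_corr.1.
have f_can : cancel f (fun x => c (v x)).
  move=> x; symmetry; apply: close.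
  have [_ h1] := distortion_leP Rl_dis (f_ok x) (v_ok (f x)).
  have [h2 _] := label_dist (lift x) (v (f x)).
  by move: h1 h2; rewrite lift_ok dist_xx; lra.
have f_inv : cancel (fun x => c (v x)) f.
  move=> x; symmetry; apply: close.
  have [h1 _] := distortion_leP Rl_dis (v_ok x) (f_ok (c (v x))).
  have [_ h2] := label_dist (v x) (lift (c (v x))).
  by move: h1 h2; rewrite lift_ok dist_xx; lra.
have f_id : f = id.
  apply: (bijective_eq_id he); first by exists (fun x => c (v x)).
  move=> x x'; have [a1 a2] := label_dist (lift x) (lift x').
  have [b1 b2] := distortion_leP Rl_dis (f_ok x) (f_ok x').
  by move: a1 a2; rewrite !lift_ok ler_norml => a1 a2; apply/andP; split; lra.
have [x hx] := Rl_corr.2 w.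
have hf := f_ok (c w); rewrite f_id in hf.
suff -> : c w = x by [].
apply: close.
have [h1 _] := distortion_leP Rl_dis hx hf.
have [_ h2] := label_dist w (lift (c w)).
by move: h1 h2; rewrite lift_ok dist_xx (dist_sym (c w) x); lra.
Qed.

Lemma label_distortion_le : distortion_le (label_rel c) (2 * h).
Proof. by move=> x x' w w' -> ->; apply: Rl_dis; apply: correspondence_contains_label. Qed.

End Rigidity.

(** * Spheres around a generic space *)

Definition sphere_label (M Y : MetricSpace) (c : Y -> M) (r : R) :=
  [/\ forall x, exists w, c w = x, distortion_le (label_rel c) (2 * r) &
      forall d, 0 < d -> d < r -> exists w w', 2 * r - d < `|dist (c w) (c w') - dist w w'|].

Lemma label_correspondence (M W : MetricSpace) (c : W -> M) :
  (forall x, exists w, c w = x) -> correspondence (label_rel c).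
Proof. by move=> c_surj; split=> [x | w]; [have [w <-] := c_surj x; exists w | exists (c w)]. Qed.

Lemma label_of_correspondence (M W : MetricSpace) (h : R) (Rl : M -> W -> Prop) :
  ((2 * h)%:E < s_of M)%E -> correspondence Rl -> distortion_le Rl (2 * h) ->
  exists c : W -> M, (forall x, exists w, c w = x) /\ distortion_le (label_rel c) (2 * h).
Proof.
move=> hs [Rl_l Rl_r] Rl_dis; have [c c_ok] := choice Rl_r.
exists c; split; last by move=> x x' w w' -> ->; apply: Rl_dis.
move=> x; have [w hw] := Rl_l x; exists w; symmetry; apply: (eq_of_dist_le hs).
by have [h1 _] := distortion_leP Rl_dis hw (c_ok w); move: h1; rewrite dist_xx; lra.
Qed.

Section Sphere.
Variables (M Y : MetricSpace) (r : R).
Hypotheses (r_gt0 : 0 < r) (hs : ((4 * r)%:E < s_of M)%E) (he : ((4 * r)%:E < e_of M)%E).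

Lemma dGH_sphere_label (c : Y -> M) : sphere_label c r -> dGH M Y = r%:E.
Proof.
move=> [c_surj c_dis c_sharp].
apply/eqP; rewrite eq_le (dGH_le_correspondence (label_correspondence c_surj) c_dis r_gt0) /=.
rewrite leNgt; apply/negP => /correspondence_dGH_lt [h [h_gt0 h_lt [Rl [Rl_corr Rl_dis]]]].
have hk : 2 * h + 2 * r <= 4 * r by lra.
have := label_distortion_le c_surj c_dis (lte_fin_le hk hs) (lte_fin_le hk he) Rl_corr Rl_dis.
have [w [w' hw]] := c_sharp (r - h) ltac:(lra) ltac:(lra).
by move/(_ _ _ w w' erefl erefl); move: hw; lra.
Qed.

(* Competing correspondences at scales approaching [r] force the distortion of a label
   down to [2 r]; a label of smaller distortion would force [dGH M Y < r]. *)
Lemma exists_sphere_label : dGH M Y = r%:E -> exists c : Y -> M, sphere_label c r.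
Proof.
move=> hY; have [e0 e0_gt0 [hs0 he0]] := lte_fin_margin hs he.
have [h0 [_ h0_lt [Rl [Rl_corr Rl_dis]]]] :=
  @correspondence_dGH_lt M Y (r + e0 / 4) ltac:(by rewrite hY lte_fin; lra).
have hk0 : 2 * h0 <= 4 * r + e0 by move: r_gt0; lra.
have [c [c_surj c_dis]] := label_of_correspondence (lte_fin_le hk0 hs0) Rl_corr Rl_dis.
have c_r : distortion_le (label_rel c) (2 * r).
  move=> x x' w w' hx hx'; apply/ler_addgt0Pr => e e_gt0.
  pose m := Num.min (e / 2) (e0 / 4).
  have m_gt0 : 0 < m by rewrite lt_min; apply/andP; split; lra.
  have m_le : m <= e / 2 /\ m <= e0 / 4 by rewrite !ge_min !lexx orbT.
  have [h [_ h_lt [R2 [R2_corr R2_dis]]]] :=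
    @correspondence_dGH_lt M Y (r + m) ltac:(by rewrite hY lte_fin; lra).
  have hk : 2 * h + 2 * h0 <= 4 * r + e0 by move: r_gt0; lra.
  have := label_distortion_le c_surj c_dis (lte_fin_le hk hs0) (lte_fin_le hk he0) R2_corr R2_dis.
  by move/(_ _ _ _ _ hx hx'); lra.
exists c; split => // d d_gt0 d_lt.
apply: contrapT => no_witness.
have c_small : distortion_le (label_rel c) (2 * (r - d / 2)).
  move=> x x' w w' -> ->; rewrite leNgt; apply/negP => hl; apply: no_witness.
  by exists w, w'; move: hl; lra.
have := dGH_le_correspondence (label_correspondence c_surj) c_small.
by rewrite hY lee_fin; lra.
Qed.

End Sphere.

(** * The doubled space and the interpolating spaces *)

Section Double.
Variables (M : MetricSpace) (r : R).

Definition sheet_shift (i : bool) : R := if i then r else - r.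

(* Each point of [M] is split into two points at distance [2 r]; between distinct points
   of [M], the [true] sheet adds [r] to the distance and the [false] sheet subtracts [r]. *)
Definition double_dist (p q : M * bool) : R :=
  if pselect (p.1 = q.1) then (if p.2 == q.2 then 0 else 2 * r)
  else dist p.1 q.1 + sheet_shift p.2 + sheet_shift q.2.

Lemma double_dist_sym p q : double_dist p q = double_dist q p.
Proof.
rewrite /double_dist; case: pselect => h1; case: pselect => h2.
- by rewrite eq_sym.
- by exfalso; apply: h2.
- by exfalso; apply: h1.
- by rewrite dist_sym -addrA [sheet_shift _ + _]addrC addrA.
Qed.

Lemma double_dist_near p q : 0 <= r -> `|double_dist p q - dist p.1 q.1| <= 2 * r.
Proof.
move=> r_ge0; rewrite /double_dist; case: pselect => h1 /=.
- by rewrite h1 dist_xx subr0; case: eqP => _; rewrite ?normr0 ?ger0_norm; lra.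
- by rewrite ler_norml /sheet_shift; case: p.2; case: q.2; apply/andP; split; lra.
Qed.

Hypotheses (r_gt0 : 0 < r) (hs : ((4 * r)%:E < s_of M)%E) (ht : ((6 * r)%:E < t_of M)%E).

Lemma double_dist_ge0 p q : 0 <= double_dist p q.
Proof.
have := r_gt0; rewrite /double_dist; case: pselect => h1 /=; first by case: eqP; lra.
by have := dist_gt_of_neq hs h1; rewrite /sheet_shift; case: p.2; case: q.2; lra.
Qed.

Lemma double_dist_eq0 p q : double_dist p q = 0 <-> p = q.
Proof.
split; last by move=> ->; rewrite /double_dist; case: pselect => h; [rewrite eqxx | case: h].
case: p q => [x i] [y j]; rewrite /double_dist /=; case: pselect => h1 /=.
- case: eqP => [-> _|_ h]; first by rewrite h1.
  by exfalso; move: h; have := r_gt0; lra.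
- move=> h; exfalso; move: h; have := dist_gt_of_neq hs h1; have := r_gt0.
  by rewrite /sheet_shift; case: i; case: j; lra.
Qed.

(* The case of three distinct points is where [6 r < t(M)] is needed. *)
Lemma double_dist_tri p q z : double_dist p z <= double_dist p q + double_dist q z.
Proof.
case: p q z => [x i] [y j] [z k]; rewrite /double_dist /= /sheet_shift.
have := r_gt0.
case: pselect => [Exz|Nxz] /=; case: pselect => [Exy|Nxy] /=; case: pselect => [Eyz|Nyz] /=.
- by case: i; case: j; case: k => /=; lra.
- by exfalso; apply: Nyz; rewrite -Exy.
- by exfalso; apply: Nxy; rewrite Exz.
- have := dist_gt_of_neq hs Nxy; have := dist_gt_of_neq hs Nyz.
  by case: i; case: j; case: k => /=; lra.
- by exfalso; apply: Nxz; rewrite Exy.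
- by rewrite Exy; have := dist_ge0 y z; case: i; case: j; case: k => /=; lra.
- by rewrite -Eyz; have := dist_ge0 x y; case: i; case: j; case: k => /=; lra.
- have := triangle_defect_gt ht Nxy Nyz Nxz.
  by case: i; case: j; case: k => /=; lra.
Qed.

Definition double : MetricSpace :=
  {| carrier := M * bool; dist := double_dist; dist_eq0 := double_dist_eq0;
     dist_sym := double_dist_sym; dist_tri := double_dist_tri |}.

End Double.

Lemma dGH_double (M : MetricSpace) (r : R) (r_gt0 : 0 < r) (hs : ((4 * r)%:E < s_of M)%E)
    (he : ((4 * r)%:E < e_of M)%E) (ht : ((6 * r)%:E < t_of M)%E) (x0 : M) :
  dGH M (double r_gt0 hs ht) = r%:E.
Proof.
apply: (@dGH_sphere_label _ _ _ r_gt0 hs he (fun p : double r_gt0 hs ht => p.1)); split.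
- by move=> x; exists (x, true).
- move=> x x' [y i] [y' j] /= -> ->; rewrite distrC.
  exact: double_dist_near (ltW r_gt0).
- move=> d d_gt0 d_lt; exists (x0, false), (x0, true) => /=.
  rewrite dist_xx /double_dist /=; case: pselect => h /=; last by exfalso; apply: h.
  by rewrite sub0r normrN ger0_norm; lra.
Qed.

Section Interpolation.
Variables (M : MetricSpace) (r : R) (Y : MetricSpace) (c : Y -> M).
Hypotheses (r_gt0 : 0 < r) (hs : ((4 * r)%:E < s_of M)%E) (ht : ((6 * r)%:E < t_of M)%E).

Definition interp_dist (u : R) (p q : Y * bool) : R :=
  (1 - u) * dist p.1 q.1 + u * double_dist r (c p.1, p.2) (c q.1, q.2).

Section Interior.
Variables (u : R) (u_gt0 : 0 < u) (u_lt1 : u < 1).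

Lemma interp_dist_eq0 p q : interp_dist u p q = 0 <-> p = q.
Proof.
split; last by move=> ->; rewrite /interp_dist dist_xx (double_dist_eq0 r_gt0 hs _ _).2 //; ring.
rewrite /interp_dist => h; have u0 := u_gt0; have u1 := u_lt1.
have d1 := dist_ge0 p.1 q.1; have d2 := double_dist_ge0 r_gt0 hs (c p.1, p.2) (c q.1, q.2).
have /dist_eq0 e1 : dist p.1 q.1 = 0 by apply/eqP; rewrite eq_le d1 andbT; nra.
have /(double_dist_eq0 r_gt0 hs) [_ e2] : double_dist r (c p.1, p.2) (c q.1, q.2) = 0.
  by apply/eqP; rewrite eq_le d2 andbT; nra.
by case: p q e1 e2 {h d1 d2 u0 u1} => [a i] [b j] /= -> ->.
Qed.

Lemma interp_dist_sym p q : interp_dist u p q = interp_dist u q p.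
Proof. by rewrite /interp_dist dist_sym double_dist_sym. Qed.

Lemma interp_dist_tri p q z : interp_dist u p z <= interp_dist u p q + interp_dist u q z.
Proof.
rewrite /interp_dist.
have := dist_tri p.1 q.1 z.1.
have := double_dist_tri r_gt0 hs ht (c p.1, p.2) (c q.1, q.2) (c z.1, z.2).
have := u_gt0; have := u_lt1; nra.
Qed.

Definition interp : MetricSpace :=
  {| carrier := Y * bool; dist := interp_dist u; dist_eq0 := interp_dist_eq0;
     dist_sym := interp_dist_sym; dist_tri := interp_dist_tri |}.

End Interior.

(* At [u = 0] the pseudometric [interp_dist u] collapses the sheets (giving [Y]); at
   [u = 1] it identifies the points with the same label (giving [double M r]). *)
Definition sphere_path (u : R) : MetricSpace :=
  match pselect (0 < u) with
  | left u_gt0 => match pselect (u < 1) with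
                  | left u_lt1 => interp u_gt0 u_lt1
                  | right _ => double r_gt0 hs ht
                  end
  | right _ => Y
  end.

Lemma sphere_path0 : sphere_path 0 = Y.
Proof. by rewrite /sphere_path; case: pselect => // h; exfalso; rewrite ltxx in h. Qed.

Lemma sphere_path1 : sphere_path 1 = double r_gt0 hs ht.
Proof.
rewrite /sphere_path; case: pselect => [u_gt0|h]; last by exfalso; apply: h; exact: ltr01.
by case: pselect => // h; exfalso; rewrite ltxx in h.
Qed.

Definition realizes (u : R) (A : MetricSpace) :=
  exists Rl : Y * bool -> A -> Prop,
    [/\ forall p, exists a, Rl p a, forall a, exists p, Rl p a &
        forall p p' a a', Rl p a -> Rl p' a' -> dist a a' = interp_dist u p p'].

Hypothesis c_surj : forall x, exists w, c w = x.

Lemma realizes_sphere_path u : 0 <= u <= 1 -> realizes u (sphere_path u).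
Proof.
move=> /andP[u_ge0 u_le1]; rewrite /sphere_path; case: pselect => u_gt0 /=; last first.
  have -> : u = 0 by apply/eqP; rewrite eq_le u_ge0 leNgt andbT; apply/negP.
  exists (fun p y => p.1 = y); split => [p | y | p p' a a' <- <-].
  - by eexists.
  - by exists (y, true).
  - by rewrite /interp_dist; ring.
case: pselect => u_lt1 /=.
  by exists eq; split => [p | p | p p' a a' <- <-]; eexists.
have -> : u = 1 by apply/eqP; rewrite eq_le u_le1 leNgt; apply/negP.
exists (fun p x => (c p.1, p.2) = x); split => [p | [x i] | p p' a a' <- <-].
- by eexists.
- by have [w <-] := c_surj x; exists (w, i).
- by rewrite /interp_dist /=; ring.
Qed.

Hypothesis c_dis : distortion_le (label_rel c) (2 * r).

Lemma interp_dist_near u p q : 0 <= u <= 1 -> `|interp_dist u p q - dist (c p.1) (c q.1)| <= 2 * r.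
Proof.
move=> /andP[u_ge0 u_le1]; rewrite /interp_dist.
have := double_dist_near (c p.1, p.2) (c q.1, q.2) (ltW r_gt0).
have := c_dis (erefl (c p.1)) (erefl (c q.1)) => /=.
by rewrite !ler_norml => /andP[a b] /andP[d e]; apply/andP; split; nra.
Qed.

Lemma interp_dist_lipschitz u v p q :
  `|interp_dist u p q - interp_dist v p q| <= 4 * r * `|u - v|.
Proof.
have -> : interp_dist u p q - interp_dist v p q =
    (u - v) * (double_dist r (c p.1, p.2) (c q.1, q.2) - dist p.1 q.1).
  by rewrite /interp_dist; ring.
rewrite normrM mulrC ler_wpM2r //.
have := double_dist_near (c p.1, p.2) (c q.1, q.2) (ltW r_gt0).
have := c_dis (erefl (c p.1)) (erefl (c q.1)) => /=.
by rewrite !ler_norml => /andP[a b] /andP[d e]; apply/andP; split; lra.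
Qed.

Lemma correspondence_realizes (A B : MetricSpace) u v : realizes u A -> realizes v B ->
  exists Rl : A -> B -> Prop, correspondence Rl /\ distortion_le Rl (4 * r * `|u - v|).
Proof.
move=> [R1 [R1_l R1_r R1_dist]] [R2 [R2_l R2_r R2_dist]].
exists (fun a b => exists p, R1 p a /\ R2 p b); split; first split.
- by move=> a; have [p hp] := R1_r a; have [b hb] := R2_l p; exists b, p.
- by move=> b; have [p hp] := R2_r b; have [a ha] := R1_l p; exists a, p.
- move=> a a' b b' [p [h1 h2]] [p' [h1' h2']].
  by rewrite (R1_dist _ _ _ _ h1 h1') (R2_dist _ _ _ _ h2 h2'); apply: interp_dist_lipschitz.
Qed.

Lemma GH_lipschitz_sphere_path : GH_lipschitz_on 0 1 (4 * r) sphere_path.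
Proof.
by move=> t t' t_in t'_in; apply: correspondence_realizes; apply: realizes_sphere_path.
Qed.

Hypotheses (he : ((4 * r)%:E < e_of M)%E)
  (c_sharp : forall d, 0 < d -> d < r ->
     exists w w', 2 * r - d < `|dist (c w) (c w') - dist w w'|).

(* The sheets are chosen so that [double_dist] pushes the distance further in the
   direction in which the label already distorts it. *)
Lemma dGH_interp u (u_gt0 : 0 < u) (u_lt1 : u < 1) : dGH M (interp u_gt0 u_lt1) = r%:E.
Proof.
apply: (@dGH_sphere_label _ _ _ r_gt0 hs he (fun p : interp u_gt0 u_lt1 => c p.1)); split.
- by move=> x; have [w <-] := c_surj x; exists (w, true).
- move=> x x' p q /= -> ->; rewrite distrC.
  by apply: interp_dist_near; apply/andP; split; apply: ltW.
move=> d d_gt0 d_lt; have [y [y' hyy]] := c_sharp d_gt0 d_lt.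
have dyy := dist_ge0 y y'; rewrite /= /interp_dist /double_dist /=.
case: (pselect (c y = c y')) => [E|NE].
  exists (y, false), (y', true) => /=; case: pselect => h /=; last by [].
  move: hyy; rewrite E dist_xx !sub0r !normrN !ger0_norm //; nra.
have [hl|hl] := leP 0 (dist (c y) (c y') - dist y y').
- exists (y, false), (y', false) => /=; case: pselect => h /=; first by [].
  by move: hyy; rewrite /sheet_shift !ger0_norm //; nra.
- exists (y, true), (y', true) => /=; case: pselect => h /=; first by [].
  by move: hyy; rewrite /sheet_shift !ltr0_norm //; nra.
Qed.

Lemma dGH_sphere_path u : dGH M (sphere_path u) = r%:E.
Proof.
have r0 := r_gt0; have [y _] := @c_sharp (r / 2) ltac:(lra) ltac:(lra).
rewrite /sphere_path; case: pselect => u_gt0 /=.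
  by case: pselect => u_lt1 /=; [exact: dGH_interp | exact: dGH_double (c y)].
by apply: (dGH_sphere_label r_gt0 hs he (c := c)); split.
Qed.

End Interpolation.

Local Open Scope ereal_scope.

Theorem theorem3 (M : MetricSpace) (r : R) :
  generic M -> (0 < r)%R ->
  (4 * r)%R%:E < s_of M -> (4 * r)%R%:E < e_of M -> (6 * r)%R%:E < t_of M ->
  forall Y1 Y2 : MetricSpace,
    dGH M Y1 = r%:E -> dGH M Y2 = r%:E ->
    exists (a b : R) (gamma : R -> MetricSpace),
      [/\ (a <= b)%R, GH_continuous_on a b gamma,
          isometric (gamma a) Y1, isometric (gamma b) Y2 &
          forall t : R, (a <= t <= b)%R -> dGH M (gamma t) = r%:E].
Proof.
move=> _ r_gt0 hs he ht Y1 Y2 hY1 hY2.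
have [c1 [c1_surj c1_dis c1_sharp]] := exists_sphere_label r_gt0 hs he hY1.
have [c2 [c2_surj c2_dis c2_sharp]] := exists_sphere_label r_gt0 hs he hY2.
have isometric_refl (X : MetricSpace) : isometric X X by exists id; split => //; exists id.
exists 0%R, 2%R, (concat_path (sphere_path c1 r_gt0 hs ht) (sphere_path c2 r_gt0 hs ht)).
split => [//| | | | t _].
- apply: (@GH_continuous_lipschitz _ _ (4 * r)); first lra.
  apply: GH_lipschitz_concat; [lra | exact: GH_lipschitz_sphere_path
                               | exact: GH_lipschitz_sphere_path | ].
  rewrite !sphere_path1; exists eq; split; first by split=> x; exists x.
  by move=> x x' _ _ <- <-; rewrite subrr normr0.
- rewrite /concat_path; case: pselect => [h|h]; last lra.
  by rewrite sphere_path0; apply: isometric_refl.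
- rewrite /concat_path; case: pselect => [h|h]; first lra.
  by rewrite subrr sphere_path0; apply: isometric_refl.
- by rewrite /concat_path; case: pselect => h; apply: dGH_sphere_path.
Qed.
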